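(* Let $\Gamma_M$ be a perfect matching graph representing a planar trivalent graph $G$ with perfect matching $M$, $|M|=n$, and let $\widetilde\Gamma_M$ be obtained from $\Gamma_M$ by a flip move (a $0$-, $1$- or $2$-flip), with the perfect matching edges of $\widetilde\Gamma_M$ ordered as in $\Gamma_M$. Then for every state $v\in\{0,1\}^n$, the resolution configuration $D_{\Gamma_M}(v)$ contains an $\eta$-arc (respectively an $m$-arc, respectively a $\Delta$-arc) if and only if $D_{\widetilde\Gamma_M}(v)$ contains an $\eta$-arc (respectively an $m$-arc, respectively a $\Delta$-arc).
   Context: A perfect matching graph $\Gamma_M$ is an embedding in $S^2$ of a planar trivalent graph $G$ together with a perfect matching $M$ of $G$; fix an ordering $M_1,\dots,M_n$ of the edges of $M$. Resolution configurations: $D=(Z(D),A(D))$ with $Z(D)$ a finite set of circles immersed in $S^2$ (union has only transverse double points) and $A(D)$ a finite totally ordered set of disjoint embedded arcs meeting the circles exactly in their endpoints. Surgery $s_A(D)$ along $A$: in a small disk around $A$ meeting the circles in segments $\alpha$ (ends $z,w$) and $\beta$ (ends $x,y$), $z,x$ on one side of $A$ and $w,y$ on the other, replace $\alpha\cup\beta$ by strands $z$–$y$ and $x$–$w$ crossing once transversally; arcs become $A(D)\setminus\{A\}$. An arc $A$ is an $\eta$-, $\Delta$-, or $m$-arc according as $|Z(s_A(D))|-|Z(D)|$ is $0$, $1$, $-1$. Resolutions: for a matching edge $e=uv$, let $a,b$ be the other two edges at $u$ and $c,d$ the other two edges at $v$, labeled so that $a,c$ lie on the same side of $e$. The $0$-resolution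 at $e$ removes $u,v$ and $e$ and joins $a$ to $c$ and $b$ to $d$ by two disjoint strands running parallel to $e$, and places an arc (crossing the former position of $e$) joining these two strands; the $1$-resolution joins $a$ to $d$ and $b$ to $c$ by two strands crossing once transversally, with no arc. For a state $v\in\{0,1\}^n$, $D_{\Gamma_M}(v)$ is the resolution configuration obtained by taking the $v_i$-resolution at $M_i$ for all $i$, arcs ordered by $i$. (Surgery along the arc at $M_i$ turns the $0$-resolution into the $1$-resolution.) Flip move: choose a closed disk $B\subset S^2$ whose boundary avoids the vertices of $\Gamma_M$ and meets $\Gamma_M$ transversally in exactly $k\in\{0,1,2\}$ points, all in interiors of edges; replace $\Gamma_M\cap B$ by its image under a reflection of $B$ (an orientation-reversing involution of $B$ fixing those $k$ boundary points), keeping $\Gamma_M$ outside $B$. This is a $k$-flip; the resulting embedding represents the same pair $(G,M)$. *)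

(* Combinatorial model of perfect matching graphs in S^2:
   a planar trivalent graph embedded in S^2 is encoded as a combinatorial map
   (rotation system) on a finite set of darts (half-edges). *)
From HB Require Import structures.
From mathcomp Require Import all_boot all_fingroup.

Set Implicit Arguments.
Unset Strict Implicit.
Unset Printing Implicit Defensive.

Section PerfectMatchingGraphs.
Variable T : finType.

(* alpha : edge involution (pairs the two darts of an edge);
   sigma : rotation at vertices (counterclockwise cyclic order of the darts
   around a vertex); vertices are the sigma-orbits, all of size 3. *)
Definition trivalent_map (alpha sigma : {perm T}) : Prop :=
  (forall d, alpha (alpha d) = d /\ alpha d <> d) /\
  (forall d, sigma (sigma (sigma d)) = d /\ sigma d <> d).

Definition map_rel (alpha sigma : {perm T}) : rel T :=
  fun x y => (y == sigma x) || (y == alpha x).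

(* genus 0 (embedding in S^2): Euler formula V - E + F = 2 per component. *)
Definition planar_map (alpha sigma : {perm T}) : Prop :=
  fcard sigma T + fcard (fun d => sigma (alpha d)) T
  = fcard alpha T + 2 * n_comp (map_rel alpha sigma) T.

Variable n : nat.

(* m i is one of the two darts of the matching edge M_(i+1). *)
Definition matched (alpha : {perm T}) (m : 'I_n -> T) (d : T) : bool :=
  [exists i, (d == m i) || (d == alpha (m i))].

Definition perfect_matching (alpha sigma : {perm T}) (m : 'I_n -> T) : Prop :=
  (forall i j, (m j == m i) || (m j == alpha (m i)) -> i = j) /\
  (forall d, matched alpha m d + matched alpha m (sigma d)
             + matched alpha m (sigma (sigma d)) = 1).

(* Strands of the b-resolution at the matching edge e = uv with dart du at u
   and dv = alpha du at v.  With counterclockwise rotations, a := sigma du and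
   c := sigma^2 dv lie on the same side of e, b := sigma^2 du and
   d := sigma dv on the other side.  The 0-resolution joins a-c and b-d,
   the 1-resolution joins a-d and b-c. *)
Definition res_joins (alpha sigma : {perm T}) (r : bool) (du x y : T) : bool :=
  let dv := alpha du in
  let a := sigma du in
  let b := sigma (sigma du) in
  let c := sigma (sigma dv) in
  let d := sigma dv in
  let j := fun p q => ((x == p) && (y == q)) || ((x == q) && (y == p)) in
  if r then j a d || j b c else j a c || j b d.

(* adjacency of the curve system Z(D(v)), on the non-matching darts:
   a dart is joined to the other half of its (non-matching) edge and, through
   the resolution of the adjacent matching edge, to another dart. *)
Definition circle_rel (alpha sigma : {perm T}) (m : 'I_n -> T)
    (v : 'I_n -> bool) : rel T :=
  fun x y => ~~ matched alpha m x && ~~ matched alpha m y &&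
    ((y == alpha x) || [exists i, res_joins alpha sigma (v i) (m i) x y]).

Definition ncircles (alpha sigma : {perm T}) (m : 'I_n -> T)
    (v : 'I_n -> bool) : nat :=
  n_comp (circle_rel alpha sigma m v) [pred d | ~~ matched alpha m d].

(* state v with v_i changed to 1: surgery along the arc at M_i. *)
Definition state_up (v : 'I_n -> bool) (i : 'I_n) : 'I_n -> bool :=
  fun j => (j == i) || v j.

Inductive arc_kind := eta_arc | m_arc | Delta_arc.

(* The arc A at M_i (present iff v_i = 0) is an eta/Delta/m-arc according as
   |Z(s_A(D))| - |Z(D)| is 0, 1, -1. *)
Definition arc_is (k : arc_kind) (before after : nat) : Prop :=
  match k with
  | eta_arc => after = before
  | Delta_arc => after = before.+1
  | m_arc => after.+1 = before
  end.

Definition has_arc (alpha sigma : {perm T}) (m : 'I_n -> T)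
    (v : 'I_n -> bool) (k : arc_kind) : Prop :=
  exists i : 'I_n, v i = false /\
    arc_is k (ncircles alpha sigma m v) (ncircles alpha sigma m (state_up v i)).

(* Flip move: the vertices inside the disk B form a sigma-closed set S of darts
   joined to the outside by at most 2 edges (k-flip, k <= 2); reflecting B
   reverses the cyclic orders at all vertices inside B. *)
Definition flip_move (alpha sigma sigma' : {perm T}) : Prop :=
  exists S : {set T},
    (forall d, (sigma d \in S) = (d \in S)) /\
    #|[set d in S | alpha d \notin S]| <= 2 /\
    (forall d, sigma' d = if d \in S then (sigma^-1)%g d else sigma d).

End PerfectMatchingGraphs.

From mathcomp Require Import all_boot all_fingroup.
Set Implicit Arguments.
Unset Strict Implicit.
Unset Printing Implicit Defensive.

(* Reflecting a disk [S] reverses the rotation inside it.  This does not change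
   the resolution of a matching edge with both ends on the same side of the
   boundary, and exchanges the 0- and 1-resolutions of a matching edge crossing
   it.  So the circles of the flipped configuration at state [v] are those of the
   original one at the state [v'] toggled at the crossing matching edges, and we
   show that this toggle preserves the number of circles, hence every arc type.
   If a matching edge crosses the boundary, parity forces all (at most two)
   crossing edges to be matching, so at most four strand ends leave [S].  Inside
   [S] the strands form paths each having an even number of these ends, and the
   toggle only swaps the two inner ends of each crossing edge; this permutes the
   inner paths, so connectivity between outside darts, and the circles lying
   inside [S], are unchanged. *)

Lemma connect_ind (T : finType) (e : rel T) (P : T -> Prop) x y :
  P x -> (forall u v, P u -> e u v -> P v) -> connect e x y -> P y.
Proof.
move=> Px step /connectP[p pth ->]; elim: p x Px pth => [|z p IH] x Px //=.
by case/andP=> exz pth; apply: IH (step _ _ Px exz) pth.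
Qed.

Lemma even_card_involution (T : finType) (A : {set T}) (g : T -> T) :
  (forall x, x \in A -> [/\ g x \in A, g x != x & g (g x) = x]) -> ~~ odd #|A|.
Proof.
have [k] := ubnP #|A|; elim: k A => // k IH A ltA gA.
have [->|[x xA]] := set_0Vmem A; first by rewrite cards0.
have [gxA gxx ggx] := gA x xA.
have cardA : #|A| = #|A :\ x :\ g x|.+2.
  by rewrite (cardsD1 x A) xA (cardsD1 (g x) (A :\ x)) !inE gxx gxA.
rewrite cardA /= negbK; apply: IH => [|y]; first by rewrite cardA ltnS in ltA; apply: ltnW.
rewrite !inE => /and3P[ygx yx yA]; have [gyA gyy ggy] := gA y yA.
split=> //; rewrite gyA andbT; apply/andP; split.
- by apply: contra yx => /eqP e; rewrite -ggy e ggx.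
- by apply: contra ygx => /eqP e; rewrite -ggy e.
Qed.

Lemma even_trace_quadruple (T : finType) (U K : {set T}) a b c d :
  #|U| <= 4 -> uniq [:: a; b; c; d] -> {subset [:: a; b; c; d] <= U} ->
  ~~ odd #|K :&: U| -> c \in K -> (a \in K) = (b \in K) -> d \in K.
Proof.
set s := [:: a; b; c; d] => U4 uniq_s sU.
have -> : U = [set x in s].
  apply/eqP; rewrite eq_sym eqEcard cardsE (card_uniqP uniq_s) U4 andbT.
  by apply/subsetP => x; rewrite inE; apply: sU.
have -> : K :&: [set x in s] = [set x in filter (mem K) s].
  by apply/setP => x; rewrite !inE mem_filter !inE.
rewrite cardsE (card_uniqP (filter_uniq _ uniq_s)) size_filter /=.
by move=> + cK ab; rewrite cK ab; case: (b \in K); case: (d \in K).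
Qed.

Lemma n_comp_eq_map (T : finType) (e e' : rel T) (a : pred T) (f : T -> T) :
  connect_sym e -> connect_sym e' -> closed e a -> closed e' a ->
  (forall x, a x -> a (f x)) ->
  (forall x y, a x -> a y -> connect e x y = connect e' (f x) (f y)) ->
  (forall y, a y -> exists x, a x /\ connect e' y (f x)) ->
  n_comp e a = n_comp e' a.
Proof.
move=> se se' ca ca' fa fc fs.
have a_root g (sg : connect_sym g) (cg : closed g a) x : a x -> a (root g x).
  by have := closed_connect cg (connect_root g x); rewrite -!topredE /= => <-.
rewrite /n_comp_mem.
set A := [set x | roots e x && a x]; set B := [set x | roots e' x && a x].
have -> : #|predI (roots e) (mem a)| = #|A| by apply: eq_card => x; rewrite !inE.
have -> : #|predI (roots e') (mem a)| = #|B| by apply: eq_card => x; rewrite !inE.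
pose F x := root e' (f x).
have injF : {in A &, injective F}.
  move=> x y; rewrite !inE => /andP[rx ax] /andP[ry ay] /(rootP se') c.
  by rewrite -(eqP rx) -(eqP ry); apply/(rootP se); rewrite fc.
rewrite -(card_in_imset injF); apply: eq_card => r; apply/imsetP/idP.
  case=> x; rewrite !inE => /andP[rx ax] ->.
  by rewrite /roots root_root // /F eqxx a_root ?fa.
rewrite inE => /andP[rr ar]; have [x [ax cx]] := fs r ar.
exists (root e x); first by rewrite inE /roots root_root // eqxx a_root.
rewrite /F -(eqP rr); apply/(rootP se'); apply: connect_trans cx _.
by rewrite -fc ?a_root // connect_root.
Qed.

(* Circle systems: the circles are the components of the graph on [N] whose
   edges are given by two involutions [al] and [K] of [N].  [In] is the inside of
   a disk crossed only by [K]-edges, and [J'] is obtained from [J] by rewiring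
   the crossing strands. *)
Section Rewiring.
Variables (T : finType) (N In : pred T) (al : T -> T).
Hypothesis alK : forall x, al (al x) = x.
Hypothesis al_neq : forall x, al x != x.
Hypothesis N_al : forall x, N x -> N (al x).
Hypothesis In_al : forall x, N x -> In (al x) = In x.

Definition circ_rel (K : T -> T) : rel T :=
  fun x y => N x && N y && ((y == al x) || (y == K x)).

Lemma circ_rel_sym K : (forall x, N x -> K (K x) = x) -> symmetric (circ_rel K).
Proof.
move=> KK x y; apply/idP/idP => /andP[/andP[Nx Ny] /orP[] /eqP yE];
by rewrite /circ_rel Nx Ny yE ?alK ?KK ?eqxx ?orbT.
Qed.

Lemma connect_circ_N K x y : N x -> connect (circ_rel K) x y -> N y.
Proof. by move=> Nx; apply: (connect_ind (P := N)) Nx _ => u v _ /andP[/andP[]]. Qed.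

Section OneWay.
Variables J J' : T -> T.
Hypothesis N_J : forall x, N x -> N (J x).
Hypothesis JK : forall x, N x -> J (J x) = x.
Hypothesis J_neq : forall x, N x -> J x != x.
Hypothesis N_J' : forall x, N x -> N (J' x).
Hypothesis J'K : forall x, N x -> J' (J' x) = x.
Hypothesis In_J' : forall x, N x -> In (J' x) = In (J x).
Hypothesis J'_inner : forall x, N x -> In (J x) = In x -> J' x = J x.
Hypothesis J'_cross : forall x, N x -> In (J x) != In x -> J' x != J x.
Hypothesis J_J' : forall x, N x -> J (J' x) = J' (J x).
Hypothesis exits_le4 : #|[set z | N z && In z && ~~ In (J z)]| <= 4.

Local Notation e := (circ_rel J).
Local Notation e' := (circ_rel J').

Definition inner_rel : rel T := fun x y => e x y && In x && In y.
Definition exits := [set z | N z && In z && ~~ In (J z)].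
Definition exit_swap z := J' (J z).

Lemma circ_rel_same_side u v : e u v -> In u = In v -> e' u v.
Proof.
case/andP=> /andP[Nu Nv] /orP[] /eqP vE iuv; rewrite /circ_rel Nu Nv vE ?eqxx //.
by rewrite J'_inner ?eqxx ?orbT // -vE iuv.
Qed.

Lemma inner_rel_sym : connect_sym inner_rel.
Proof.
apply: sym_connect_sym => x y.
by rewrite /inner_rel (circ_rel_sym JK) -!andbA [In x && _]andbC.
Qed.

Lemma connect_inner_N x y : N x -> In x -> connect inner_rel x y -> N y && In y.
Proof.
move=> Nx ix; apply: (connect_ind (P := fun u => N u && In u)); first by rewrite Nx.
by move=> u v _ /andP[/andP[/andP[/andP[_ ->] _] _] ->].
Qed.

Lemma exit_swapP z :
  z \in exits -> [/\ exit_swap z \in exits, exit_swap z != z & exit_swap (exit_swap z) = z].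
Proof.
rewrite inE => /andP[/andP[Nz iz] jz]; have NJz := N_J Nz.
have cross : In (J z) != In z by rewrite iz (negbTE jz).
split.
- by rewrite inE /exit_swap N_J' // In_J' // JK // iz J_J' // JK // In_J'.
- by apply: contra (J'_cross Nz cross) => /eqP h; rewrite -{1}h J'K.
- by rewrite /exit_swap J_J' // JK // J'K // JK.
Qed.

(* An inner component is a union of paths whose ends are exits. *)
Lemma even_exits_inner z : N z -> In z ->
  ~~ odd #|[set y | connect inner_rel z y] :&: exits|.
Proof.
move=> Nz iz; set K := [set y | connect inner_rel z y].
have KN y : y \in K -> N y && In y by rewrite inE; apply: connect_inner_N.
have K_step y y' : y \in K -> inner_rel y y' -> y' \in K.
  by rewrite !inE => zy yy'; apply: connect_trans zy (connect1 yy').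
have evenK : ~~ odd #|K|.
  apply: (even_card_involution (g := al)) => y yK; have /andP[Ny iy] := KN _ yK.
  split; rewrite ?alK ?al_neq //; apply: K_step yK _.
  by rewrite /inner_rel /circ_rel Ny N_al // eqxx In_al // iy.
have evenKnotU : ~~ odd #|K :\: exits|.
  apply: (even_card_involution (g := J)) => y; rewrite inE => /andP[yU yK].
  have /andP[Ny iy] := KN _ yK.
  have iJy : In (J y) by move: yU; rewrite inE Ny iy negbK.
  split; rewrite ?JK ?J_neq //.
  rewrite inE [J y \in exits]inE JK // iy andbF /=; apply: K_step yK _.
  by rewrite /inner_rel /circ_rel Ny N_J // eqxx orbT iy iJy.
by move: evenK; rewrite -(cardsID exits K) oddD (negbTE evenKnotU) addbF setIC.
Qed.

(* At most four exits, each inner component holding an even number of them: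
   so [exit_swap] permutes the inner components through exits. *)
Lemma connect_exit_swap z z' : z \in exits -> z' \in exits ->
  connect inner_rel z z' -> connect inner_rel (exit_swap z) (exit_swap z').
Proof.
move=> zU z'U zz'.
have [tzU tzz ttz] := exit_swapP zU; have [tz'U tz'z' ttz'] := exit_swapP z'U.
have [-> | z'z] := eqVneq z' z; first exact: connect0.
have [z'E | z'tz] := eqVneq z' (exit_swap z).
  by rewrite z'E ttz inner_rel_sym -z'E.
have /andP[Ntz itz] : N (exit_swap z) && In (exit_swap z).
  by move: tzU; rewrite inE => /andP[].
suff : exit_swap z' \in [set y | connect inner_rel (exit_swap z) y] by rewrite inE.
apply: (even_trace_quadruple (U := exits) (a := z) (b := z') (c := exit_swap z) exits_le4).
- have zt'z' : z != exit_swap z' by apply: contraNneq z'tz => ->; rewrite ttz'.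
  have tzt'z' : exit_swap z != exit_swap z'.
    by apply: contraNneq z'z => h; rewrite -[z']ttz' -h ttz.
  rewrite /= !inE !negb_or zt'z' z'tz tzt'z' [z == z']eq_sym z'z.
  by rewrite [z == exit_swap z]eq_sym tzz [z' == exit_swap z']eq_sym tz'z'.
- by apply/allP; rewrite /= zU z'U tzU tz'U.
- exact: even_exits_inner.
- by rewrite inE connect0.
- by rewrite !inE (same_connect_r inner_rel_sym zz').
Qed.

Lemma connect_outside x y :
  N x -> ~~ In x -> connect e x y -> ~~ In y -> connect e' x y.
Proof.
move=> Nx ix xy iy.
pose Inv u := (~~ In u -> connect e' x u) /\ (In u -> exists w,
  [/\ N w, ~~ In w, In (J w), connect e' x w & connect inner_rel (J w) u]).
suff [] : Inv y by move=> + _; apply.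
apply: (connect_ind (P := Inv)) xy.
  by split=> [_|]; [exact: connect0 | rewrite (negbTE ix)].
move=> u v [outu inu] euv; have /andP[/andP[Nu Nv] uv] := euv.
have JvE : In u != In v -> v = J u.
  by case/orP: uv => /eqP // -> /negP[]; rewrite In_al.
rewrite /Inv; case iu : (In u); case iv : (In v); split=> // _.
- have [w [Nw iw iJw xw Jwu]] := inu iu; exists w; split=> //.
  by apply: connect_trans Jwu (connect1 _); rewrite /inner_rel euv iu iv.
- have {}JvE : v = J u by rewrite JvE ?iu ?iv.
  have [w [Nw iw iJw xw Jwu]] := inu iu.
  have JwU : J w \in exits by rewrite inE N_J // iJw JK // iw.
  have uU : u \in exits by rewrite inE Nu iu -JvE iv.
  have := connect_exit_swap JwU uU Jwu; rewrite /exit_swap JK // -JvE => J'wJ'v.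
  apply: connect_trans xw (connect_trans (connect1 (_ : e' w (J' w))) _).
    by rewrite /circ_rel Nw N_J' // eqxx orbT.
  apply: connect_trans (connect_sub _ J'wJ'v) (connect1 _).
    move=> p q /andP[/andP[epq ip] iq]; apply: connect1.
    by apply: circ_rel_same_side epq _; rewrite ip iq.
  by rewrite /circ_rel N_J' // Nv J'K // eqxx orbT.
- have {}JvE : v = J u by rewrite JvE ?iu ?iv.
  by exists u; rewrite -JvE iv iu Nu outu ?connect0 ?iu.
- by apply: connect_trans (outu _) (connect1 _); rewrite ?iu // circ_rel_same_side ?iu.
Qed.

Lemma connect_inside y : N y -> (forall z, connect e y z -> In z) ->
  connect e y =1 connect e' y.
Proof.
move=> Ny yIn z.
have step u v : connect e y u -> e u v -> e' u v.
  move=> yu euv; have yv := connect_trans yu (connect1 euv).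
  by apply: circ_rel_same_side euv _; rewrite !yIn.
have step' u v : connect e y u -> e' u v -> e u v.
  move=> yu /andP[/andP[Nu Nv] /orP[] /eqP vE]; rewrite /circ_rel Nu Nv vE ?eqxx //.
  have euJu : e u (J u) by rewrite /circ_rel Nu N_J // eqxx orbT.
  by rewrite J'_inner ?eqxx ?orbT // !yIn // (connect_trans yu (connect1 euJu)).
pose P u := connect e y u /\ connect e' y u.
have P_step (r : rel T) : (forall u v, connect e y u -> r u v -> e u v /\ e' u v) ->
    forall u v, P u -> r u v -> P v.
  move=> h u v [yu y'u] /(h u v yu)[euv e'uv].
  by split; [apply: connect_trans yu (connect1 euv) |
             apply: connect_trans y'u (connect1 e'uv)].
have P0 : P y by split; apply: connect0.
apply/idP/idP => yz.
  by have [] := connect_ind P0 (P_step e (fun u v yu euv => conj euv (step u v yu euv))) yz.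
by have [] := connect_ind P0 (P_step e' (fun u v yu e'uv => conj (step' u v yu e'uv) e'uv)) yz.
Qed.

End OneWay.

Section TwoWays.
Variables J J' : T -> T.
Hypothesis N_J : forall x, N x -> N (J x).
Hypothesis JK : forall x, N x -> J (J x) = x.
Hypothesis J_neq : forall x, N x -> J x != x.
Hypothesis N_J' : forall x, N x -> N (J' x).
Hypothesis J'K : forall x, N x -> J' (J' x) = x.
Hypothesis J'_neq : forall x, N x -> J' x != x.
Hypothesis In_J' : forall x, N x -> In (J' x) = In (J x).
Hypothesis J'_inner : forall x, N x -> In (J x) = In x -> J' x = J x.
Hypothesis J'_cross : forall x, N x -> In (J x) != In x -> J' x != J x.
Hypothesis J_J' : forall x, N x -> J (J' x) = J' (J x).
Hypothesis exits_le4 : #|[set z | N z && In z && ~~ In (J z)]| <= 4.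

Let J_inner x : N x -> In (J' x) = In x -> J x = J' x.
Proof. by move=> Nx; rewrite In_J' // => /J'_inner->. Qed.

Let J_cross x : N x -> In (J' x) != In x -> J x != J' x.
Proof. by move=> Nx; rewrite In_J' // => /(J'_cross Nx); rewrite eq_sym. Qed.

Let exits'_le4 : #|[set z | N z && In z && ~~ In (J' z)]| <= 4.
Proof.
apply: leq_trans exits_le4; apply: subset_leq_card; apply/subsetP => z.
by rewrite !inE; case Nz: (N z); rewrite //= In_J'.
Qed.

Let outside := connect_outside N_J JK J_neq N_J' J'K In_J' J'_inner J'_cross J_J' exits_le4.
Let outside' := connect_outside N_J' J'K J'_neq N_J JK
  (fun x Nx => esym (In_J' Nx)) J_inner J_cross (fun x Nx => esym (J_J' Nx)) exits'_le4.

(* Each circle meeting the outside is sent to one of its outside points;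
   circles lying inside are unchanged. *)
Lemma n_comp_rewire : n_comp (circ_rel J) N = n_comp (circ_rel J') N.
Proof.
have se := sym_connect_sym (circ_rel_sym JK).
have se' := sym_connect_sym (circ_rel_sym J'K).
have closedN K : closed (circ_rel K) N.
  by move=> x y /andP[/andP[Nx Ny] _]; rewrite -!topredE /= Nx Ny.
pose f x := odflt x [pick y | connect (circ_rel J) x y && ~~ In y].
have fP x : N x -> (exists2 x0, f x = x0 & [/\ N x0, connect (circ_rel J) x x0 & ~~ In x0])
    \/ (f x = x /\ forall z, connect (circ_rel J) x z -> In z).
  move=> Nx; rewrite /f; case: pickP => [x0 /andP[c i] | no] /=.
    by left; exists x0 => //; split => //; apply: connect_circ_N c.
  by right; split => // z c; move: (no z); rewrite c => /negbFE.
apply: (n_comp_eq_map (f := f)) => //.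
- by move=> x Nx; have [[x0 -> []] | [-> _]] := fP x Nx.
- move=> x y Nx Ny.
  have [[x0 -> [Nx0 xx0 ix0]] | [-> xIn]] := fP x Nx;
  have [[y0 -> [Ny0 yy0 iy0]] | [-> yIn]] := fP y Ny.
  + rewrite (same_connect se xx0) (se x0) (same_connect se yy0) se.
    by apply/idP/idP => h; [apply: outside | apply: outside'].
  + apply/idP/idP => h; move: ix0; rewrite (yIn x0) //.
      by rewrite se; apply: connect_trans h; rewrite se.
    by rewrite (connect_inside N_J J'_inner Ny yIn) se'.
  + apply/idP/idP => h; move: iy0; rewrite (xIn y0) //; first exact: connect_trans h yy0.
    by rewrite (connect_inside N_J J'_inner Nx xIn).
  + by rewrite (connect_inside N_J J'_inner Nx xIn).
- move=> y Ny.
  case: (pickP [pred z | connect (circ_rel J') y z && ~~ In z]) => [z /andP[yz iz] | no].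
    have Nz := connect_circ_N Ny yz; exists z; split=> //.
    have [[z0 -> [Nz0 zz0 iz0]] | [_ zIn]] := fP z Nz.
      exact: connect_trans yz (outside _ _ _ _).
    by move: iz; rewrite (zIn z (connect0 _ z)).
  have yIn' z : connect (circ_rel J') y z -> In z.
    by move=> c; move: (no z); rewrite /= c => /negbFE.
  have yIn z : connect (circ_rel J) y z -> In z.
    by move=> c; have := yIn' z; rewrite (connect_inside N_J' J_inner Ny yIn'); apply.
  exists y; split=> //; have [[y0 -> [_ c i]] | [-> _]] := fP y Ny; last exact: connect0.
  by move: i; rewrite (yIn _ c).
Qed.

End TwoWays.
End Rewiring.

Section Strands.
Variables (T : finType) (alpha sigma : {perm T}) (M : pred T).
Hypothesis alphaK : forall d, alpha (alpha d) = d.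
Hypothesis alpha_neq : forall d, alpha d != d.
Hypothesis sigma3 : forall d, sigma (sigma (sigma d)) = d.
Hypothesis M_alpha : forall d, M (alpha d) = M d.
Hypothesis M_vertex : forall d, M d + M (sigma d) + M (sigma (sigma d)) = 1.

Definition hub x := if M (sigma x) then sigma x else sigma (sigma x).
Definition hub_next x := ~~ M (sigma x).

Lemma hub_nextE x : x = if hub_next x then sigma (hub x) else sigma (sigma (hub x)).
Proof. by rewrite /hub_next /hub; case: (M (sigma x)); rewrite /= sigma3. Qed.

Lemma eq_dart x y : hub x = hub y -> hub_next x = hub_next y -> x = y.
Proof. by move=> eh en; rewrite (hub_nextE x) (hub_nextE y) eh en. Qed.

Lemma M_sigma d : M d -> ~~ M (sigma d) && ~~ M (sigma (sigma d)).
Proof.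
by move: (M_vertex d) => /[swap] ->; case: (M (sigma d)); case: (M (sigma (sigma d))).
Qed.

Lemma M_hub x : ~~ M x -> M (hub x).
Proof.
move=> nx; rewrite /hub; case: ifP => // nsx.
by move: (M_vertex (sigma x)); rewrite sigma3 (negbTE nx) nsx; case: M.
Qed.

Lemma hub_sigma d : M d -> hub (sigma d) = d /\ hub_next (sigma d).
Proof. by case/M_sigma/andP => _ n2; rewrite /hub /hub_next (negbTE n2) sigma3. Qed.

Lemma hub_sigma2 d : M d -> hub (sigma (sigma d)) = d /\ hub_next (sigma (sigma d)) = false.
Proof. by move=> md; rewrite /hub /hub_next sigma3 md. Qed.

Lemma hub_in (S : {set T}) x : (forall d, (sigma d \in S) = (d \in S)) ->
  (hub x \in S) = (x \in S).
Proof. by move=> SP; rewrite [in RHS](hub_nextE x); case: hub_next; rewrite !SP. Qed.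

(* The two non-matching darts at the vertex of [hub x] are [sigma (hub x)] and
   [sigma (sigma (hub x))]; [hub_next x] tells which one [x] is. *)
Definition other x := if hub_next x then sigma (sigma (hub x)) else sigma (hub x).

(* [strand b x] is the dart joined to the non-matching dart [x] by the
   resolution of the matching edge [hub x] at state [b (hub x)]. *)
Definition strand (b : T -> bool) x :=
  let h := alpha (hub x) in
  if hub_next x == b (hub x) then sigma h else sigma (sigma h).

Lemma strand_hub b x : ~~ M x ->
  hub (strand b x) = alpha (hub x) /\ hub_next (strand b x) = (hub_next x == b (hub x)).
Proof.
move=> nx; have ma : M (alpha (hub x)) by rewrite M_alpha M_hub.
rewrite /strand; case: eqP => _.
  by have [-> ->] := hub_sigma ma.
by have [-> ->] := hub_sigma2 ma.
Qed.

Lemma strand_sigma b d : M d ->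
  strand b (sigma d) = if b d then sigma (alpha d) else sigma (sigma (alpha d)).
Proof. by move=> md; have [h n] := hub_sigma md; rewrite /strand h n; case: (b d). Qed.

Lemma strand_sigma2 b d : M d ->
  strand b (sigma (sigma d)) = if b d then sigma (sigma (alpha d)) else sigma (alpha d).
Proof. by move=> md; have [h n] := hub_sigma2 md; rewrite /strand h n; case: (b d). Qed.

Lemma strand_unmatched b x : ~~ M x -> ~~ M (strand b x).
Proof.
move=> nx; have ma : M (alpha (hub x)) by rewrite M_alpha M_hub.
have /andP[n1 n2] := M_sigma ma.
by rewrite /strand; case: ifP.
Qed.

Lemma strand_neq b x : ~~ M x -> strand b x != x.
Proof.
move=> nx; apply/eqP => e; have [h _] := strand_hub b nx; rewrite e in h.
by move: (alpha_neq (hub x)); rewrite -h eqxx.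
Qed.

Lemma strand_comm b b' x : (forall d, b (alpha d) = b d) ->
  (forall d, b' (alpha d) = b' d) -> ~~ M x ->
  strand b (strand b' x) = strand b' (strand b x).
Proof.
move=> bA b'A nx; have [h' n'] := strand_hub b' nx; have [h n] := strand_hub b nx.
have [hh' nn'] := strand_hub b (strand_unmatched b' nx).
have [hh nn] := strand_hub b' (strand_unmatched b nx).
apply: eq_dart; first by rewrite hh' hh h h'.
by rewrite nn' nn h h' n n' bA b'A; case: hub_next; case: (b _); case: (b' _).
Qed.

Lemma strandK b x : (forall d, b (alpha d) = b d) -> ~~ M x -> strand b (strand b x) = x.
Proof.
move=> bA nx; have [h n] := strand_hub b nx.
have [hh nn] := strand_hub b (strand_unmatched b nx).
apply: eq_dart; first by rewrite hh h alphaK.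
by rewrite nn n h bA; case: hub_next; case: (b _).
Qed.

Lemma strand_eq b b' x : b (hub x) = b' (hub x) -> strand b x = strand b' x.
Proof. by rewrite /strand => ->. Qed.

Lemma strand_neq_label b b' x : ~~ M x -> b (hub x) != b' (hub x) -> strand b x != strand b' x.
Proof.
move=> nx bb'; apply/eqP => e; have [_ n] := strand_hub b nx; have [_ n'] := strand_hub b' nx.
by move: bb'; rewrite e n' in n; case: hub_next n; case: (b _); case: (b' _).
Qed.

Lemma strand_in (S : {set T}) b x : (forall d, (sigma d \in S) = (d \in S)) ->
  (strand b x \in S) = (alpha (hub x) \in S).
Proof. by move=> SP; rewrite /strand; case: ifP; rewrite !SP. Qed.

Lemma other_hub x : ~~ M x -> hub (other x) = hub x /\ hub_next (other x) = ~~ hub_next x.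
Proof.
move=> nx; have mh := M_hub nx; rewrite /other.
by case: hub_next; [have [-> ->] := hub_sigma2 mh | have [-> ->] := hub_sigma mh].
Qed.

Lemma otherP x : ~~ M x -> [/\ ~~ M (other x), other x != x & other (other x) = x].
Proof.
move=> nx; have [h nh] := other_hub nx; have /andP[n1 n2] := M_sigma (M_hub nx).
have no : ~~ M (other x) by rewrite /other; case: hub_next.
split=> //; first by apply/eqP => e; move: nh; rewrite e; case: hub_next.
by have [h2 nh2] := other_hub no; apply: eq_dart; rewrite ?h2 ?h ?nh2 ?nh ?negbK.
Qed.

End Strands.

Section StateLabels.
Variables (T : finType) (n : nat) (alpha : {perm T}) (m : 'I_n -> T).
Hypothesis alphaK : forall d, alpha (alpha d) = d.
Hypothesis m_inj : forall i j, (m j == m i) || (m j == alpha (m i)) -> i = j.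

Local Notation M := (matched alpha m).

Lemma edge_alpha d i : ((alpha d == m i) || (alpha d == alpha (m i))) =
  ((d == m i) || (d == alpha (m i))).
Proof.
rewrite orbC (inj_eq perm_inj); congr orb.
by rewrite -{1}(alphaK (m i)) (inj_eq perm_inj).
Qed.

Lemma matched_alpha d : M (alpha d) = M d.
Proof. by apply: eq_existsb => i; rewrite edge_alpha. Qed.

(* The state bit of the matching edge through [d] (junk value [false] when [d]
   is not a matching dart). *)
Definition state_label (w : 'I_n -> bool) d : bool :=
  if [pick i | (d == m i) || (d == alpha (m i))] is Some i then w i else false.

Lemma state_labelE w d i : (d == m i) || (d == alpha (m i)) -> state_label w d = w i.
Proof.
move=> di; rewrite /state_label; case: pickP => [j dj | /(_ i)]; last by rewrite di.
congr w; case/orP: di => /eqP di; rewrite {d}di in dj;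
  case/orP: dj => /eqP dj; apply: m_inj.
- by rewrite dj eqxx.
- by rewrite dj eqxx orbT.
- by rewrite -dj alphaK eqxx orbT.
- by rewrite (perm_inj dj) eqxx.
Qed.

Lemma state_label_alpha w d : state_label w (alpha d) = state_label w d.
Proof. by rewrite /state_label (eq_pick (edge_alpha d)). Qed.

Section Resolution.
Variable sigma : {perm T}.
Hypothesis sigma3 : forall d, sigma (sigma (sigma d)) = d.
Hypothesis M_vertex : forall d, M d + M (sigma d) + M (sigma (sigma d)) = 1.

Lemma res_joins_strand w x y : ~~ M x ->
  [exists i, res_joins alpha sigma (w i) (m i) x y] =
  (y == strand alpha sigma M (state_label w) x).
Proof.
have Mm j : M (m j) by apply/existsP; exists j; rewrite eqxx.
have Mam j : M (alpha (m j)) by rewrite matched_alpha.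
have lm j : state_label w (m j) = w j by apply: state_labelE; rewrite eqxx.
have lam j : state_label w (alpha (m j)) = w j by rewrite state_label_alpha.
move=> nx; apply/existsP/eqP => [[j]|->].
  have s1 := strand_sigma alpha sigma3 M_vertex (state_label w) (Mm j).
  have s2 := strand_sigma2 alpha sigma3 (state_label w) (Mm j).
  have s3 := strand_sigma alpha sigma3 M_vertex (state_label w) (Mam j).
  have s4 := strand_sigma2 alpha sigma3 (state_label w) (Mam j).
  rewrite /res_joins; case: (w j) (lm j) (lam j) => lj laj /=;
  by move=> /orP[/orP[]|/orP[]] /andP[/eqP-> /eqP->];
     rewrite ?s1 ?s2 ?s3 ?s4 ?lj ?laj ?alphaK.
have /existsP[i /orP[] /eqP hi] := M_hub sigma3 M_vertex nx;
  exists i; rewrite [in res_joins _ _ _ _ x](hub_nextE M sigma3 x) /strand hi;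
  rewrite ?lm ?lam ?alphaK /res_joins;
  by case: hub_next; case: (w i); rewrite !eqxx ?orbT.
Qed.

Lemma circle_relE w : circle_rel alpha sigma m w =2
  circ_rel (fun d => ~~ M d) alpha (strand alpha sigma M (state_label w)).
Proof.
move=> x y; rewrite /circle_rel /circ_rel.
by case nx: (~~ M x) => //=; rewrite res_joins_strand ?nx.
Qed.

End Resolution.
End StateLabels.

Section DiskReflection.
Variables (T : finType) (n : nat) (alpha sigma : {perm T}) (m : 'I_n -> T) (S : {set T}).
Local Notation M := (matched alpha m).
Hypothesis alphaK : forall d, alpha (alpha d) = d.
Hypothesis alpha_neq : forall d, alpha d != d.
Hypothesis sigma3 : forall d, sigma (sigma (sigma d)) = d.
Hypothesis m_inj : forall i j, (m j == m i) || (m j == alpha (m i)) -> i = j.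
Hypothesis M_vertex : forall d, M d + M (sigma d) + M (sigma (sigma d)) = 1.
Hypothesis S_sigma : forall d, (sigma d \in S) = (d \in S).
Hypothesis crossings_le2 : #|[set d in S | alpha d \notin S]| <= 2.

Let M_alpha := matched_alpha m alphaK.
Let matched_hub x : ~~ M x -> M (hub sigma M x) := @M_hub _ _ _ sigma3 M_vertex x.

Definition crosses d := (d \in S) != (alpha d \in S).

Lemma crosses_alpha d : crosses (alpha d) = crosses d.
Proof. by rewrite /crosses alphaK eq_sym. Qed.

Definition toggle (w : 'I_n -> bool) i := w i (+) crosses (m i).

Lemma state_label_toggle w d : M d ->
  state_label alpha m (toggle w) d = state_label alpha m w d (+) crosses d.
Proof.
case/existsP=> i di.
rewrite (state_labelE alphaK m_inj _ di) (state_labelE alphaK m_inj w di) /toggle.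
by case/orP: di => /eqP->; rewrite ?crosses_alpha.
Qed.

(* Reflection replaces [sigma] by [sigma^-1] at both ends of an inner edge, which
   maps each resolution to itself, but at only one end of a crossing edge, which
   exchanges its two resolutions. *)
Lemma res_joins_reflect (sigma' : {perm T}) r du x y :
  (forall d, sigma' d = if d \in S then (sigma^-1)%g d else sigma d) ->
  res_joins alpha sigma' r du x y = res_joins alpha sigma (r (+) crosses du) du x y.
Proof.
move=> sigma'E.
have sE d : sigma' d = if d \in S then sigma (sigma d) else sigma d.
  by rewrite sigma'E; case: ifP => // _; rewrite -{1}(sigma3 d) permK.
rewrite /res_joins /crosses !sE.
case duS: (du \in S); case aS: (alpha du \in S); rewrite /= ?S_sigma ?duS ?aS /= ?sigma3;
  by case: r; rewrite //= orbC.
Qed.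

Lemma ncircles_reflect (sigma' : {perm T}) w :
  (forall d, sigma' d = if d \in S then (sigma^-1)%g d else sigma d) ->
  ncircles alpha sigma' m w = ncircles alpha sigma m (toggle w).
Proof.
move=> sigma'E; apply: eq_n_comp; apply: eq_connect => x y.
by rewrite /circle_rel (eq_existsb (fun i => res_joins_reflect _ _ _ _ sigma'E)).
Qed.

(* Non-matching darts inside [S] come in pairs at each vertex, so an even
   number of non-matching edges cross the boundary of [S]; as a matching edge
   already crosses it, there is no room for another crossing edge. *)
Lemma unmatched_alpha_in : (exists d, M d && crosses d) ->
  forall x, ~~ M x -> (alpha x \in S) = (x \in S).
Proof.
case=> d0 /andP[Md0 c0].
set Sn := [set d in S | ~~ M d]; set A := [set d | alpha d \in S].
set B := [set d in S | alpha d \notin S].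
have evenSn : ~~ odd #|Sn|.
  apply: (even_card_involution (g := other sigma M)) => x; rewrite inE => /andP[xS nx].
  have [no nox oo] := otherP sigma3 M_vertex nx; have [h _] := other_hub sigma3 M_vertex nx.
  by rewrite inE no andbT -(hub_in M sigma3 _ S_sigma) h (hub_in M sigma3 _ S_sigma) xS.
have evenSnA : ~~ odd #|Sn :&: A|.
  apply: (even_card_involution (g := alpha)) => x; rewrite !inE => /andP[/andP[xS nx] axS].
  by rewrite alphaK xS axS M_alpha nx alpha_neq.
have evenSnnotA : ~~ odd #|Sn :\: A|.
  by move: evenSn; rewrite -(cardsID A Sn) oddD (negbTE evenSnA).
have [d1 Md1 d1B] : exists2 d1, M d1 & d1 \in B.
  move: c0; rewrite /crosses; case d0S: (d0 \in S) => ad0S.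
    by exists d0; rewrite // inE d0S; case: (alpha d0 \in S) ad0S.
  exists (alpha d0); first by rewrite M_alpha.
  by rewrite inE alphaK d0S; case: (alpha d0 \in S) ad0S.
have SnA0 : Sn :\: A = set0.
  apply/eqP; rewrite -cards_eq0; move: evenSnnotA.
  have : #|d1 |: (Sn :\: A)| <= 2.
    apply: leq_trans crossings_le2; apply: subset_leq_card; apply/subsetP => y.
    rewrite !inE => /orP[/eqP-> | /andP[ayS /andP[yS _]]]; last by rewrite yS ayS.
    by move: d1B; rewrite inE.
  by rewrite cardsU1 !inE Md1 !andbF /=; case: #|Sn :\: A| => [|[|k]].
have stays y : ~~ M y -> y \in S -> alpha y \in S.
  move=> ny yS; apply: contraT => ayS.
  have : y \in Sn :\: A by rewrite !inE yS ny ayS.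
  by rewrite SnA0 inE.
move=> x nx; apply/idP/idP => [axS | /(stays x nx)//].
by rewrite -[x]alphaK stays ?M_alpha.
Qed.

Lemma exits_le4 b :
  #|[set z | ~~ M z && (z \in S) && ~~ (strand alpha sigma M b z \in S)]| <= 4.
Proof.
set B := [set d in S | alpha d \notin S].
apply: (@leq_trans #|[set sigma d | d in B] :|: [set sigma (sigma d) | d in B]|).
  apply: subset_leq_card; apply/subsetP => z; rewrite inE => /andP[/andP[nz zS] Jz].
  have hB : hub sigma M z \in B.
    by rewrite inE (hub_in M sigma3 _ S_sigma) zS -(strand_in alpha M b _ S_sigma).
  rewrite (hub_nextE M sigma3 z) inE; case: hub_next; apply/orP; [left | right];
  by apply/imsetP; exists (hub sigma M z).
apply: leq_trans (leq_card_setU _ _).1 _.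
apply: leq_trans (leq_add (leq_imset_card _ _) (leq_imset_card _ _)) _.
exact: leq_add crossings_le2 crossings_le2.
Qed.

Lemma ncircles_toggle w :
  ncircles alpha sigma m (toggle w) = ncircles alpha sigma m w.
Proof.
have bA := state_label_alpha m alphaK w; have b'A := state_label_alpha m alphaK (toggle w).
rewrite /ncircles !(eq_n_comp (eq_connect (circle_relE alphaK m_inj sigma3 M_vertex _))).
rewrite !(@eq_n_comp_r _ _ _ (fun d => ~~ M d)) //.
have [crossing | /existsPn nocut] := boolP [exists d, M d && crosses d].
  symmetry; apply: (n_comp_rewire (In := fun d => d \in S)) => //.
  - by move=> x; rewrite M_alpha.
  - by move=> x; apply: unmatched_alpha_in; apply/existsP.
  - exact: strand_unmatched.
  - by move=> x; apply: (strandK alphaK sigma3 M_alpha M_vertex).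
  - exact: strand_neq.
  - exact: strand_unmatched.
  - by move=> x; apply: (strandK alphaK sigma3 M_alpha M_vertex).
  - exact: strand_neq.
  - by move=> x nx; rewrite !(strand_in alpha M _ _ S_sigma).
  - move=> x nx; rewrite (strand_in alpha M _ _ S_sigma) -(hub_in M sigma3 x S_sigma) => aS.
    by apply: strand_eq; rewrite state_label_toggle ?matched_hub // /crosses aS eqxx addbF.
  - move=> x nx; rewrite (strand_in alpha M _ _ S_sigma) -(hub_in M sigma3 x S_sigma) eq_sym.
    move=> cross; apply: strand_neq_label => //.
    by rewrite state_label_toggle ?matched_hub // /crosses cross; case: (state_label _ _ _ _).
  - by move=> x nx; apply: strand_comm.
  - exact: exits_le4.
apply: eq_n_comp; apply: eq_connect => x y; rewrite /circ_rel.
case nx: (~~ M x) => //=; rewrite (@strand_eq _ _ _ _ _ (state_label alpha m w)) //.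
have /negbTE no_cross : ~~ crosses (hub sigma M x).
  by have := nocut (hub sigma M x); rewrite matched_hub.
by rewrite state_label_toggle ?matched_hub // no_cross addbF.
Qed.

End DiskReflection.

Unset Implicit Arguments.

Theorem mainTheorem7 (T : finType) (n : nat) (alpha sigma sigma' : {perm T})
    (m : 'I_n -> T) :
  trivalent_map alpha sigma -> planar_map alpha sigma ->
  perfect_matching alpha sigma m ->
  flip_move alpha sigma sigma' -> planar_map alpha sigma' ->
  forall (v : 'I_n -> bool) (k : arc_kind),
    has_arc alpha sigma m v k <-> has_arc alpha sigma' m v k.
Proof.
move=> [alphaP sigmaP] _ [m_inj M_vertex] [S [S_sigma [crossings_le2 sigma'E]]] _ v k.
have alphaK d : alpha (alpha d) = d by case: (alphaP d).
have alpha_neq d : alpha d != d by apply/eqP; case: (alphaP d).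
have sigma3 d : sigma (sigma (sigma d)) = d by case: (sigmaP d).
have ncircles_eq w : ncircles alpha sigma' m w = ncircles alpha sigma m w.
  rewrite (ncircles_reflect alpha m sigma3 S_sigma w sigma'E).
  exact: (ncircles_toggle alphaK alpha_neq sigma3 m_inj M_vertex S_sigma crossings_le2).
by split=> -[i [vi arc]]; exists i; rewrite !ncircles_eq in arc *.
Qed.
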